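(* For all $k\in\mathbb{N}$ and all indices $i\ne j$ in their respective ranges, $\lambda^{(k)}_{i,j}\ge0$ and $\mu^{(k)}_{i,j}\ge0$.
   Context: $\rho=1+\sqrt2$; $\alpha_t=\rho^{\nu(t+1)-1}+1$ ($\nu(i)$ the largest $j$ with $2^j\mid i$). For $k\in\mathbb{N}$, $n=2^k-1$, $\pi^{(k)}=[\alpha_0,\dots,\alpha_{n-1}]\in\mathbb{R}^n$, indexed $\pi^{(k)}_1,\dots,\pi^{(k)}_n$. Define $c^{(k)}\in\mathbb{R}^n$ (indexed $1,\dots,n$) by $c^{(1)}=[2(\rho-1)]$, $c^{(k+1)}=[\pi^{(k)},(1+\rho^{-k})(\rho^{k-1}+1),\rho c^{(k)}-(\rho-1-\rho^{-k})\pi^{(k)}]$. Multipliers $\lambda^{(k)}_{i,j}$, $i\in\{0,\dots,n,*\}$, $j\in\{0,\dots,n\}$: $\lambda^{(k)}_{i,j}=\bar\lambda^{(k)}_{i,j}$ for $i\ne *$ and $\lambda^{(k)}_{*,j}=\underline\lambda^{(k)}_j$, where $\underline\lambda^{(k)}=[\pi^{(k)},\rho^k]$ indexed $0,\dots,n$ (so $\underline\lambda^{(k)}_j=\alpha_j$ for $j<n$, $\underline\lambda^{(k)}_n=\rho^k$). $\bar\lambda^{(1)}$ (indices $0,1$) has $\bar\lambda^{(1)}_{0,1}=\rho$, $\bar\lambda^{(1)}_{1,0}=1$, other entries $0$. For $n=2^k-1$ and indices $0\le i,j\le 2n+1$, $\bar\lambda^{(k+1)}_{i,j}$ is the sum of: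 $\bar\lambda^{(k)}_{i,j}\mathbf 1\{0\le i,j\le n\}+\rho^2\bar\lambda^{(k)}_{i-n-1,j-n-1}\mathbf 1\{n+1\le i,j\le 2n+1\}$; $\rho\mathbf 1\{(i,j)=(n,2n+1)\}+\rho^k\mathbf 1\{(i,j)=(2n+1,n)\}$; and $\rho\pi^{(k)}_{j-n}\mathbf 1\{i=n,\ n+1\le j\le 2n\}+\rho\pi^{(k)}_{j-n}\mathbf 1\{i=2n+1,\ n+1\le j\le 2n\}$. Multipliers $\mu^{(k)}_{i,j}$, $i\in\{1,\dots,n,*\}$, $j\in\{1,\dots,n\}$: $\mu^{(k)}_{i,j}=\bar\mu^{(k)}_{i,j}$ for $i\ne*$ and $\mu^{(k)}_{*,j}=c^{(k)}_j+\mathbf 1\{j=1\}$. $\bar\mu^{(1)}_{1,1}=0$. For $1\le i,j\le 2n+1$, $\bar\mu^{(k+1)}_{i,j}$ is the sum of: $\bar\mu^{(k)}_{i,j}\mathbf 1\{1\le i,j\le n\}+\rho^2\bar\mu^{(k)}_{i-n-1,j-n-1}\mathbf 1\{n+2\le i,j\le 2n+1\}$; $\rho^k\mathbf 1\{(i,j)=(n,n+1)\}+\rho^2\mathbf 1\{(i,j)=(n+1,n+2)\}+(\rho-\rho^{-k})(\rho^{k-1}+1)\mathbf 1\{(i,j)=(2n+1,n+1)\}$; and $\big(1-\frac{\rho^k}{\rho^{k-1}+1}\big)(c^{(k)}_j-\pi^{(k)}_j)\mathbf 1\{i=n,1\le j\le n\}+\frac{\rho^k}{\rho^{k-1}+1}(c^{(k)}_j-\pi^{(k)}_j)\mathbf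 1\{i=n+1,1\le j\le n\}+\frac{\rho^k}{\rho^{k-1}+1}\pi^{(k)}_{j-n-1}\mathbf 1\{i=n,n+2\le j\le 2n+1\}+\frac{\rho}{\rho^{k-1}+1}\pi^{(k)}_{j-n-1}\mathbf 1\{i=n+1,n+2\le j\le2n+1\}+\big((\rho+1)c^{(k)}_{j-n-1}-(1+\rho^{-k})\pi^{(k)}_{j-n-1}\big)\mathbf 1\{i=2n+1,n+2\le j\le 2n+1\}$. *)

From Stdlib Require Import Reals ZArith Arith Lia.
Open Scope R_scope.

Definition rho : R := 1 + sqrt 2.

Fixpoint nu_fuel (f i : nat) : nat :=
  match f with
  | O => O
  | S f' => if Nat.eqb i 0 then O
            else if Nat.even i then S (nu_fuel f' (Nat.div2 i)) else O
  end.
Definition nu (i : nat) : nat := nu_fuel i i.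

(* alpha_t = rho^(nu(t+1) - 1) + 1  (integer exponent, may be -1) *)
Definition alpha (t : nat) : R :=
  powerRZ rho (Z.of_nat (nu (t + 1)) - 1) + 1.

Definition dim (k : nat) : nat := 2 ^ k - 1.

Definition ind (b : bool) (x : R) : R := if b then x else 0.

Definition piv (k j : nat) : R :=
  ind ((1 <=? j)%nat && (j <=? dim k)%nat) (alpha (j - 1)).

(* c^(k), indexed 1..n; c^(0) is a dummy (zero). *)
Definition c_step (k : nat) (ck : nat -> R) (j : nat) : R :=
  let n := dim k in
  ind ((1 <=? j)%nat && (j <=? n)%nat) (piv k j)
  + ind (Nat.eqb j (n + 1)) ((1 + / rho ^ k) * (rho ^ (k - 1) + 1))
  + ind ((n + 2 <=? j)%nat && (j <=? 2 * n + 1)%nat)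
        (rho * ck (j - n - 1)%nat - (rho - 1 - / rho ^ k) * piv k (j - n - 1)%nat).

Fixpoint cvec (k : nat) : nat -> R :=
  match k with
  | O => fun _ => 0
  | S k' => match k' with
            | O => fun j => ind (Nat.eqb j 1) (2 * (rho - 1))
            | S _ => c_step k' (cvec k')
            end
  end.

Definition lbar_step (k : nat) (lk : nat -> nat -> R) (i j : nat) : R :=
  let n := dim k in
  ind ((i <=? n)%nat && (j <=? n)%nat) (lk i j)
  + ind ((n + 1 <=? i)%nat && (i <=? 2 * n + 1)%nat
         && (n + 1 <=? j)%nat && (j <=? 2 * n + 1)%nat)
        (rho ^ 2 * lk (i - n - 1)%nat (j - n - 1)%nat)
  + ind (Nat.eqb i n && Nat.eqb j (2 * n + 1)) rho
  + ind (Nat.eqb i (2 * n + 1) && Nat.eqb j n) (rho ^ k)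
  + ind (Nat.eqb i n && (n + 1 <=? j)%nat && (j <=? 2 * n)%nat)
        (rho * piv k (j - n)%nat)
  + ind (Nat.eqb i (2 * n + 1) && (n + 1 <=? j)%nat && (j <=? 2 * n)%nat)
        (rho * piv k (j - n)%nat).

Fixpoint lbar (k : nat) : nat -> nat -> R :=
  match k with
  | O => fun _ _ => 0
  | S k' => match k' with
            | O => fun i j => ind (Nat.eqb i 0 && Nat.eqb j 1) rho
                              + ind (Nat.eqb i 1 && Nat.eqb j 0) 1
            | S _ => lbar_step k' (lbar k')
            end
  end.

Definition llow (k j : nat) : R :=
  if (j <? dim k)%nat then alpha j else rho ^ k.

Definition mbar_step (k : nat) (mk : nat -> nat -> R) (i j : nat) : R :=
  let n := dim k in
  let ck := cvec k in
  let q := rho ^ k / (rho ^ (k - 1) + 1) in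
  ind ((1 <=? i)%nat && (i <=? n)%nat && (1 <=? j)%nat && (j <=? n)%nat) (mk i j)
  + ind ((n + 2 <=? i)%nat && (i <=? 2 * n + 1)%nat
         && (n + 2 <=? j)%nat && (j <=? 2 * n + 1)%nat)
        (rho ^ 2 * mk (i - n - 1)%nat (j - n - 1)%nat)
  + ind (Nat.eqb i n && Nat.eqb j (n + 1)) (rho ^ k)
  + ind (Nat.eqb i (n + 1) && Nat.eqb j (n + 2)) (rho ^ 2)
  + ind (Nat.eqb i (2 * n + 1) && Nat.eqb j (n + 1))
        ((rho - / rho ^ k) * (rho ^ (k - 1) + 1))
  + ind (Nat.eqb i n && (1 <=? j)%nat && (j <=? n)%nat)
        ((1 - q) * (ck j - piv k j))
  + ind (Nat.eqb i (n + 1) && (1 <=? j)%nat && (j <=? n)%nat)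
        (q * (ck j - piv k j))
  + ind (Nat.eqb i n && (n + 2 <=? j)%nat && (j <=? 2 * n + 1)%nat)
        (q * piv k (j - n - 1)%nat)
  + ind (Nat.eqb i (n + 1) && (n + 2 <=? j)%nat && (j <=? 2 * n + 1)%nat)
        (rho / (rho ^ (k - 1) + 1) * piv k (j - n - 1)%nat)
  + ind (Nat.eqb i (2 * n + 1) && (n + 2 <=? j)%nat && (j <=? 2 * n + 1)%nat)
        ((rho + 1) * ck (j - n - 1)%nat - (1 + / rho ^ k) * piv k (j - n - 1)%nat).

Fixpoint mbar (k : nat) : nat -> nat -> R :=
  match k with
  | O => fun _ _ => 0
  | S k' => match k' with
            | O => fun _ _ => 0
            | S _ => mbar_step k' (mbar k')
            end
  end.

Definition mlow (k j : nat) : R := cvec k j + ind (Nat.eqb j 1) 1.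

(* Every entry of the recursion for lambda-bar is a sum of nonnegative terms.
   For mu-bar, the only factor that can be negative is 1 - q_k, with
   q_k = rho^k / (rho^(k-1) + 1) > 1; it multiplies c^(k) - pi^(k) on row n.
   One therefore proves by induction on k that c^(k) >= pi^(k), that mu-bar^(k)
   is nonnegative off the diagonal, and that row n of mu-bar^(k) plus
   (1 - q_k) (c^(k) - pi^(k)) is nonnegative: the latter is row n of
   mu-bar^(k+1) on its first block, and on the new last row it expands, using
   rho^2 = 2 rho + 1, into the old invariant with nonnegative coefficients. *)

From Stdlib Require Import Reals Arith Lia Lra.
Open Scope R_scope.

Lemma rho_sq : rho ^ 2 = 2 * rho + 1.
Proof. unfold rho. pose proof (sqrt_sqrt 2 ltac:(lra)). nra. Qed.

Lemma rho_gt2 : 2 < rho.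
Proof.
  unfold rho. pose proof (sqrt_sqrt 2 ltac:(lra)). pose proof (sqrt_pos 2). nra.
Qed.

Lemma rho_gt1 : 1 < rho.
Proof. pose proof rho_gt2. lra. Qed.

Lemma Rinv_le_1 y : 1 <= y -> / y <= 1.
Proof. intros Hy. rewrite <- Rinv_1. apply Rinv_le_contravar; lra. Qed.

Lemma nu_fuel_enough f f' i : (i <= f)%nat -> (i <= f')%nat -> nu_fuel f i = nu_fuel f' i.
Proof.
  revert f' i. induction f as [|f IH]; intros f' i Hf Hf'.
  - replace i with 0%nat by lia. destruct f'; reflexivity.
  - destruct f' as [|f']; [replace i with 0%nat by lia; reflexivity|].
    simpl. destruct (Nat.eqb_spec i 0); [reflexivity|].
    destruct (Nat.even i); [|reflexivity].
    pose proof (Nat.lt_div2 i ltac:(lia)). f_equal. apply IH; lia.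
Qed.

Lemma nu_double m : (1 <= m)%nat -> nu (2 * m) = S (nu m).
Proof.
  intros Hm. unfold nu. replace (2 * m)%nat with (S (2 * m - 1)) at 1 by lia. cbn [nu_fuel].
  destruct (Nat.eqb_spec (2 * m) 0); [lia|].
  rewrite Nat.even_even, Nat.div2_double. f_equal. apply nu_fuel_enough; lia.
Qed.

Lemma nu_odd m : nu (2 * m + 1) = 0%nat.
Proof.
  unfold nu. replace (2 * m + 1)%nat with (S (2 * m)) at 1 by lia. cbn [nu_fuel].
  destruct (Nat.eqb_spec (2 * m + 1) 0); [lia|].
  now rewrite Nat.even_odd.
Qed.

Lemma pow2_ge1 k : (1 <= 2 ^ k)%nat.
Proof. pose proof (Nat.pow_nonzero 2 k ltac:(lia)). lia. Qed.

Lemma nu_pow2 k : nu (2 ^ k) = k.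
Proof.
  induction k as [|k IH]; [reflexivity|].
  rewrite Nat.pow_succ_r', nu_double by apply pow2_ge1. now rewrite IH.
Qed.

Lemma nu_add_pow2 k j : (1 <= j < 2 ^ k)%nat -> nu (2 ^ k + j) = nu j.
Proof.
  revert j. induction k as [|k IH]; intros j Hj; [simpl in Hj; lia|].
  rewrite Nat.pow_succ_r' in *.
  destruct (Nat.Even_or_Odd j) as [[h ->]|[h ->]].
  - replace (2 * 2 ^ k + 2 * h)%nat with (2 * (2 ^ k + h))%nat by lia.
    rewrite !nu_double, IH by lia. reflexivity.
  - replace (2 * 2 ^ k + (2 * h + 1))%nat with (2 * (2 ^ k + h) + 1)%nat by lia.
    now rewrite !nu_odd.
Qed.

Lemma alpha_gt0 t : 0 < alpha t.
Proof.
  pose proof rho_gt1. unfold alpha.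
  pose proof (powerRZ_lt rho (Z.of_nat (nu (t + 1)) - 1) ltac:(lra)). lra.
Qed.

Lemma alpha_pow2_pred k : (1 <= k)%nat -> alpha (2 ^ k - 1) = rho ^ (k - 1) + 1.
Proof.
  intros hk. unfold alpha. pose proof (pow2_ge1 k).
  replace (2 ^ k - 1 + 1)%nat with (2 ^ k)%nat by lia.
  rewrite nu_pow2, pow_powerRZ. do 2 f_equal. lia.
Qed.

Lemma alpha_add_pow2 k t : (t + 1 < 2 ^ k)%nat -> alpha (2 ^ k + t) = alpha t.
Proof.
  intros Ht. unfold alpha. replace (2 ^ k + t + 1)%nat with (2 ^ k + (t + 1))%nat by lia.
  now rewrite nu_add_pow2 by lia.
Qed.

Lemma dim_succ k : dim (S k) = (2 * dim k + 1)%nat.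
Proof. unfold dim. rewrite Nat.pow_succ_r'. pose proof (pow2_ge1 k). lia. Qed.

Lemma dim_ge1 k : (1 <= k)%nat -> (1 <= dim k)%nat.
Proof. intros hk. destruct k as [|k]; [lia|]. rewrite dim_succ. lia. Qed.

Lemma ind_ge0 b x : 0 <= x -> 0 <= ind b x.
Proof. destruct b; simpl; lra. Qed.

Ltac split_guards :=
  repeat match goal with
  | |- context [Nat.leb ?a ?b] => destruct (Nat.leb_spec a b); try lia
  | |- context [Nat.eqb ?a ?b] => destruct (Nat.eqb_spec a b); try lia
  end; cbn [andb ind].

Lemma piv_ge0 k j : 0 <= piv k j.
Proof. apply ind_ge0, Rlt_le, alpha_gt0. Qed.

Lemma piv_succ_lo k j : (j <= dim k)%nat -> piv (S k) j = piv k j.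
Proof. intros Hj. unfold piv. rewrite dim_succ. split_guards; reflexivity. Qed.

Lemma piv_succ_mid k : (1 <= k)%nat -> piv (S k) (dim k + 1) = rho ^ (k - 1) + 1.
Proof.
  intros hk. unfold piv. rewrite dim_succ. split_guards.
  rewrite <- alpha_pow2_pred by exact hk. f_equal. unfold dim. lia.
Qed.

Lemma piv_succ_hi k j : (1 <= j <= dim k)%nat -> piv (S k) (dim k + 1 + j) = piv k j.
Proof.
  intros Hj. unfold piv. rewrite dim_succ. split_guards.
  unfold dim in *. pose proof (pow2_ge1 k).
  replace (2 ^ k - 1 + 1 + j - 1)%nat with (2 ^ k + (j - 1))%nat by lia.
  apply alpha_add_pow2. lia.
Qed.

Lemma cvec_succ k j : (1 <= k)%nat -> cvec (S k) j = c_step k (cvec k) j.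
Proof. intros hk. destruct k; [lia | reflexivity]. Qed.

Lemma mbar_succ k i j : (1 <= k)%nat -> mbar (S k) i j = mbar_step k (mbar k) i j.
Proof. intros hk. destruct k; [lia | reflexivity]. Qed.

Lemma lbar_ge0 k i j : 0 <= lbar k i j.
Proof.
  pose proof rho_gt1 as Hr.
  revert i j. induction k as [|[|k] IH]; intros i j; simpl; [lra | |].
  - apply Rplus_le_le_0_compat; apply ind_ge0; lra.
  - pose proof (pow_le rho (S k) ltac:(lra)).
    repeat apply Rplus_le_le_0_compat; apply ind_ge0; try lra; try apply IH;
      apply Rmult_le_pos; try apply IH; try apply piv_ge0; nra.
Qed.

Record mu_invariant (k : nat) : Prop := {
  cvec_ge_piv : forall j, (1 <= j <= dim k)%nat -> piv k j <= cvec k j;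
  mbar_offdiag_ge0 : forall i j, (1 <= i <= dim k)%nat -> (1 <= j <= dim k)%nat -> i <> j ->
    0 <= mbar k i j;
  mbar_row_dim_ge0 : forall j, (1 <= j < dim k)%nat ->
    0 <= mbar k (dim k) j + (1 - rho ^ k / (rho ^ (k - 1) + 1)) * (cvec k j - piv k j)
}.

Lemma mu_invariant_1 : mu_invariant 1.
Proof.
  assert (D1 : dim 1 = 1%nat) by reflexivity.
  split; rewrite D1; [|lia..].
  intros j Hj. replace j with 1%nat by lia.
  change (cvec 1 1) with (2 * (rho - 1)). unfold piv, alpha. rewrite D1. simpl.
  pose proof rho_gt2. pose proof (Rinv_le_1 (rho * 1) ltac:(lra)). lra.
Qed.

Lemma last_row_mid_ge0 x y : 0 < y -> 0 <= x + 1 ->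
  0 <= (rho - / y) * (x + 1) + (1 - rho * y / (y + 1)) * ((1 + / y) * (x + 1) - (x + 1)).
Proof.
  intros Hy Hx. pose proof rho_gt1.
  replace ((rho - / y) * (x + 1) + (1 - rho * y / (y + 1)) * ((1 + / y) * (x + 1) - (x + 1)))
    with (rho * y * (x + 1) / (y + 1)) by (field; lra).
  assert (0 < / (y + 1)) by (apply Rinv_0_lt_compat; lra).
  repeat apply Rmult_le_pos; lra.
Qed.

Lemma last_row_hi_ge0 x y M c p : 0 < x <= y ->
  0 <= M + (1 - y / (x + 1)) * (c - p) -> p <= c -> 0 <= p ->
  0 <= rho ^ 2 * M + (rho + 1) * c - (1 + / y) * p
       + (1 - rho * y / (y + 1)) * (rho * c - (rho - 1 - / y) * p - p).
Proof.
  intros [Hx Hxy] Hh Hd Hp. pose proof rho_gt1.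
  set (h := M + (1 - y / (x + 1)) * (c - p)) in Hh.
  assert (E : rho ^ 2 * M + (rho + 1) * c - (1 + / y) * p
                + (1 - rho * y / (y + 1)) * (rho * c - (rho - 1 - / y) * p - p)
              = rho ^ 2 * h + rho ^ 2 * y * (/ (x + 1) - / (y + 1)) * (c - p)
                + rho * y / (y + 1) * p + (2 * rho + 1 - rho ^ 2) * (c - p))
    by (unfold h; field; lra).
  rewrite E, rho_sq, Rminus_diag, Rmult_0_l, Rplus_0_r.
  assert (/ (y + 1) <= / (x + 1)) by (apply Rinv_le_contravar; lra).
  assert (0 < / (y + 1)) by (apply Rinv_0_lt_compat; lra).
  assert (0 <= (2 * rho + 1) * h) by (apply Rmult_le_pos; lra).
  assert (0 <= (2 * rho + 1) * y * (/ (x + 1) - / (y + 1)) * (c - p))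
    by (repeat apply Rmult_le_pos; lra).
  assert (0 <= rho * y / (y + 1) * p) by (repeat apply Rmult_le_pos; lra).
  lra.
Qed.

Section Succ.

Variable k : nat.
Hypothesis hk : (1 <= k)%nat.

Lemma cvec_succ_lo j : (1 <= j <= dim k)%nat -> cvec (S k) j = piv k j.
Proof. intros Hj. rewrite cvec_succ by exact hk. unfold c_step. split_guards. ring. Qed.

Lemma cvec_succ_mid : cvec (S k) (dim k + 1) = (1 + / rho ^ k) * (rho ^ (k - 1) + 1).
Proof. rewrite cvec_succ by exact hk. unfold c_step. split_guards. ring. Qed.

Lemma cvec_succ_hi j : (1 <= j <= dim k)%nat ->
  cvec (S k) (dim k + 1 + j) = rho * cvec k j - (rho - 1 - / rho ^ k) * piv k j.
Proof.
  intros Hj. rewrite cvec_succ by exact hk. unfold c_step. split_guards.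
  replace (dim k + 1 + j - dim k - 1)%nat with j by lia. ring.
Qed.

Lemma mbar_succ_last_lo j : (1 <= j <= dim k)%nat -> mbar (S k) (2 * dim k + 1) j = 0.
Proof.
  intros Hj. rewrite mbar_succ by exact hk. unfold mbar_step. split_guards. ring.
Qed.

Lemma mbar_succ_last_mid :
  mbar (S k) (2 * dim k + 1) (dim k + 1) = (rho - / rho ^ k) * (rho ^ (k - 1) + 1).
Proof.
  pose proof (dim_ge1 k hk).
  rewrite mbar_succ by exact hk. unfold mbar_step. split_guards. ring.
Qed.

Lemma mbar_succ_last_hi j : (1 <= j <= dim k)%nat ->
  mbar (S k) (2 * dim k + 1) (dim k + 1 + j)
  = rho ^ 2 * mbar k (dim k) j + (rho + 1) * cvec k j - (1 + / rho ^ k) * piv k j.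
Proof.
  intros Hj. rewrite mbar_succ by exact hk. unfold mbar_step. split_guards;
  replace (dim k + 1 + j - dim k - 1)%nat with j by lia;
  replace (2 * dim k + 1 - dim k - 1)%nat with (dim k) by lia; ring.
Qed.

Hypothesis IH : mu_invariant k.

Let rho_pow_ge1 : 1 <= rho ^ k.
Proof. apply pow_R1_Rle. pose proof rho_gt1. lra. Qed.

Let rho_pow_pred_ge1 : 1 <= rho ^ (k - 1).
Proof. apply pow_R1_Rle. pose proof rho_gt1. lra. Qed.

Lemma cvec_succ_ge_piv j : (1 <= j <= dim (S k))%nat -> piv (S k) j <= cvec (S k) j.
Proof.
  rewrite dim_succ. intros Hj. pose proof (Rinv_le_1 _ rho_pow_ge1).
  assert (0 < / rho ^ k) by (apply Rinv_0_lt_compat; lra).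
  destruct (le_lt_dec j (dim k)) as [Hlo|Hhi].
  - rewrite cvec_succ_lo, piv_succ_lo by lia. lra.
  - destruct (Nat.eq_dec j (dim k + 1)) as [->|Hmid].
    + rewrite cvec_succ_mid, piv_succ_mid by exact hk.
      assert (0 <= / rho ^ k * (rho ^ (k - 1) + 1)) by (apply Rmult_le_pos; lra). lra.
    + replace j with (dim k + 1 + (j - dim k - 1))%nat by lia.
      rewrite cvec_succ_hi, piv_succ_hi by lia.
      pose proof (cvec_ge_piv _ IH (j - dim k - 1) ltac:(lia)).
      pose proof (piv_ge0 k (j - dim k - 1)). pose proof rho_gt1. nra.
Qed.

Lemma mbar_succ_offdiag_ge0 i j :
  (1 <= i <= dim (S k))%nat -> (1 <= j <= dim (S k))%nat -> i <> j -> 0 <= mbar (S k) i j.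
Proof.
  rewrite dim_succ. intros Hi Hj Hij. destruct IH as [Hc Hb Hrow].
  pose proof rho_gt1. pose proof (Rinv_le_1 _ rho_pow_ge1).
  assert (Hq : 0 <= rho ^ k / (rho ^ (k - 1) + 1)).
  { apply Rmult_le_pos; [lra | left; apply Rinv_0_lt_compat; lra]. }
  assert (0 <= rho / (rho ^ (k - 1) + 1)).
  { apply Rmult_le_pos; [lra | left; apply Rinv_0_lt_compat; lra]. }
  rewrite mbar_succ by exact hk. unfold mbar_step. cbv zeta.
  (* The sixth summand, whose factor [1 - q] is negative, is absorbed by the first. *)
  match goal with
  | |- 0 <= ?a1 + ?a2 + ?a3 + ?a4 + ?a5 + ?a6 + ?a7 + ?a8 + ?a9 + ?a10 =>
      enough (0 <= a1 + a6 /\ 0 <= a2 /\ 0 <= a3 /\ 0 <= a4 /\ 0 <= a5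
              /\ 0 <= a7 /\ 0 <= a8 /\ 0 <= a9 /\ 0 <= a10) by lra
  end.
  repeat split.
  - split_guards; rewrite ?Rplus_0_r, ?Rplus_0_l; try lra; try (apply Hb; lia).
    subst i. apply Hrow. lia.
  - split_guards; try lra. apply Rmult_le_pos; [nra | apply Hb; lia].
  - apply ind_ge0. lra.
  - apply ind_ge0. nra.
  - apply ind_ge0. apply Rmult_le_pos; lra.
  - split_guards; try lra. apply Rmult_le_pos; [exact Hq|].
    apply Rge_le, Rge_minus, Rle_ge, Hc. lia.
  - apply ind_ge0, Rmult_le_pos; [exact Hq | apply piv_ge0].
  - apply ind_ge0, Rmult_le_pos; [assumption | apply piv_ge0].
  - split_guards; try lra.
    pose proof (Hc (j - dim k - 1)%nat ltac:(lia)). pose proof (piv_ge0 k (j - dim k - 1)).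
    assert (0 <= (rho - / rho ^ k) * piv k (j - dim k - 1)) by (apply Rmult_le_pos; lra).
    nra.
Qed.

Lemma mbar_succ_row_dim_ge0 j : (1 <= j < dim (S k))%nat ->
  0 <= mbar (S k) (dim (S k)) j
       + (1 - rho ^ S k / (rho ^ (S k - 1) + 1)) * (cvec (S k) j - piv (S k) j).
Proof.
  rewrite dim_succ. intros Hj. replace (S k - 1)%nat with k by lia.
  change (rho ^ S k) with (rho * rho ^ k).
  destruct (le_lt_dec j (dim k)) as [Hlo|Hhi].
  - rewrite mbar_succ_last_lo, cvec_succ_lo, piv_succ_lo by lia. lra.
  - destruct (Nat.eq_dec j (dim k + 1)) as [->|Hmid].
    + rewrite mbar_succ_last_mid, cvec_succ_mid, piv_succ_mid by exact hk.
      apply (last_row_mid_ge0 (rho ^ (k - 1)) (rho ^ k)); lra.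
    + replace j with (dim k + 1 + (j - dim k - 1))%nat by lia.
      rewrite mbar_succ_last_hi, cvec_succ_hi, piv_succ_hi by lia.
      assert (rho ^ (k - 1) <= rho ^ k) by (apply Rle_pow; [pose proof rho_gt1; lra | lia]).
      apply (last_row_hi_ge0 (rho ^ (k - 1))); [lra | apply (mbar_row_dim_ge0 _ IH); lia
                             | apply (cvec_ge_piv _ IH); lia | apply piv_ge0].
Qed.

Lemma mu_invariant_succ : mu_invariant (S k).
Proof.
  split; [exact cvec_succ_ge_piv | exact mbar_succ_offdiag_ge0 | exact mbar_succ_row_dim_ge0].
Qed.

End Succ.

Lemma mu_invariant_all k : (1 <= k)%nat -> mu_invariant k.
Proof.
  induction k as [|k IH]; intros hk; [lia|].
  destruct (Nat.eq_dec k 0) as [->|Hk]; [exact mu_invariant_1|].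
  apply mu_invariant_succ; [lia | apply IH; lia].
Qed.

Theorem lemma12 (k : nat) (hk : (1 <= k)%nat) :
  (forall i j : nat, (i <= dim k)%nat -> (j <= dim k)%nat -> i <> j ->
     0 <= lbar k i j)
  /\ (forall j : nat, (j <= dim k)%nat -> 0 <= llow k j)
  /\ (forall i j : nat, (1 <= i <= dim k)%nat -> (1 <= j <= dim k)%nat -> i <> j ->
     0 <= mbar k i j)
  /\ (forall j : nat, (1 <= j <= dim k)%nat -> 0 <= mlow k j).
Proof.
  destruct (mu_invariant_all k hk) as [Hc Hb _].
  pose proof rho_gt1.
  split; [|split; [|split]].
  - intros i j _ _ _. apply lbar_ge0.
  - intros j _. unfold llow. destruct (j <? dim k)%nat.
    + apply Rlt_le, alpha_gt0.
    + apply pow_le. lra.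
  - exact Hb.
  - intros j Hj. unfold mlow.
    pose proof (Hc j Hj). pose proof (piv_ge0 k j). pose proof (ind_ge0 (j =? 1) 1 ltac:(lra)).
    lra.
Qed.
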